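(* Let $r\ge 1$ and let $G$ be a connected $r$-regular graph. Then $G$ has a strong clique of size two if and only if $G$ is isomorphic to the complete bipartite graph $K_{r,r}$.
   Context: A clique is strong if it intersects every maximal (inclusion-wise) independent set of the graph. *)

From mathcomp Require Import all_boot.
Set Implicit Arguments. Unset Strict Implicit. Unset Printing Implicit Defensive.

Definition simple_graph (T : finType) (e : rel T) : Prop :=
  symmetric e /\ irreflexive e.

Definition connected_graph (T : finType) (e : rel T) : Prop :=
  forall x y : T, connect e x y.

Definition regular (T : finType) (e : rel T) (r : nat) : Prop :=
  forall x : T, #|[set y | e x y]| = r.

Definition independent (T : finType) (e : rel T) (A : {set T}) : bool :=
  [forall x in A, forall y in A, ~~ e x y].

Definition max_independent (T : finType) (e : rel T) (A : {set T}) : bool :=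
  maxset (independent e) A.

Definition clique (T : finType) (e : rel T) (C : {set T}) : bool :=
  [forall x in C, forall y in C, (x != y) ==> e x y].

Definition strong_clique (T : finType) (e : rel T) (C : {set T}) : Prop :=
  clique e C /\ forall I : {set T}, max_independent e I -> C :&: I != set0.

Definition Kbip_rel (r : nat) : rel ('I_r + 'I_r) :=
  fun u v => match u, v with
             | inl _, inr _ | inr _, inl _ => true
             | _, _ => false
             end.

Definition graph_iso (T U : finType) (e : rel T) (f : rel U) : Prop :=
  exists phi : T -> U, bijective phi /\ forall x y, f (phi x) (phi y) = e x y.

(* If {u, v} is a strong clique and e u a, e v b, then a and b are adjacent:
   otherwise {a, b} extends to a maximal independent set, which must contain
   u or v, next to a or b.  Hence every neighbour x of u is adjacent to all
   of N(v), and r-regularity forces N(x) = N(v); symmetrically for v.  So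
   N(u) and N(v) are disjoint and their union is closed under adjacency;
   by connectivity it is the whole graph, which is K_{r,r} with sides N(v)
   and N(u).  Conversely, in K_{r,r} every maximal independent set is a
   whole side, so any edge is a strong clique. *)
From mathcomp Require Import all_boot.

Set Implicit Arguments.
Unset Strict Implicit.
Unset Printing Implicit Defensive.

Lemma independentP (T : finType) (e : rel T) (I : {set T}) :
  reflect {in I &, forall x y, ~~ e x y} (independent e I).
Proof.
apply: (iffP forallP) => [H x y xI yI | H x].
  by move/implyP/(_ xI)/forallP/(_ y)/implyP/(_ yI): (H x).
by apply/implyP => xI; apply/forallP => y; apply/implyP; apply: H.
Qed.

Lemma cliqueP (T : finType) (e : rel T) (C : {set T}) :
  reflect {in C &, forall x y, x != y -> e x y} (clique e C).
Proof.
apply: (iffP forallP) => [H x y xC yC | H x].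
  by move/implyP/(_ xC)/forallP/(_ y)/implyP/(_ yC)/implyP: (H x).
apply/implyP => xC; apply/forallP => y; apply/implyP => yC.
by apply/implyP; apply: H.
Qed.

Section StrongEdge.

Variables (T : finType) (e : rel T).
Hypotheses (e_sym : symmetric e) (e_irr : irreflexive e).

Lemma independent_set2 a b : ~~ e a b -> independent e [set a; b].
Proof.
move=> nab; apply/independentP => x y.
by rewrite !inE => /orP[]/eqP-> /orP[]/eqP->; rewrite ?e_irr // e_sym.
Qed.

Lemma strong_clique2_adj u v a b :
  strong_clique e [set u; v] -> e u a -> e v b -> e a b.
Proof.
move=> [_ meets] ua vb; apply/negPn/negP => /independent_set2 indab.
have [I maxI abI] := maxset_exists indab.
have /independentP indI := maxsetp maxI.
have aI : a \in I by rewrite (subsetP abI) ?set21.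
have bI : b \in I by rewrite (subsetP abI) ?set22.
case/set0Pn: (meets I maxI) => x; rewrite !inE => /andP[/orP[]/eqP-> xI].
- by case/negP: (indI _ _ xI aI).
- by case/negP: (indI _ _ xI bI).
Qed.

Lemma strong_clique2_nbr r u v x :
  regular e r -> strong_clique e [set u; v] -> e u x ->
  [set y | e x y] = [set y | e v y].
Proof.
move=> reg uv_strong ux; apply/eqP; rewrite eq_sym eqEcard !reg leqnn andbT.
by apply/subsetP => y; rewrite !inE; apply: strong_clique2_adj uv_strong ux.
Qed.

Lemma strong_edge_bipartition r u v :
  connected_graph e -> regular e r -> strong_clique e [set u; v] -> e u v ->
  forall x y, e x y = (e u x != e u y).
Proof.
move=> conn reg uv_strong uv.
have vu_strong : strong_clique e [set v; u] by rewrite setUC.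
have Nu x y : e u x -> e x y = e v y.
  by move/(strong_clique2_nbr reg uv_strong)/setP/(_ y); rewrite !inE.
have Nv x y : e v x -> e x y = e u y.
  by move/(strong_clique2_nbr reg vu_strong)/setP/(_ y); rewrite !inE.
have disj x : e u x -> e v x -> False.
  by move=> ux vx; have := strong_clique2_adj uv_strong ux vx; rewrite e_irr.
have step a b : e a b -> e u a || e v a -> e u b || e v b.
  by move=> ab /orP[/Nu|/Nv] <-; rewrite ab ?orbT.
have cover x : e u x || e v x.
  have closed_uv : closed e [pred z | e u z || e v z].
    by move=> a b ab; apply/idP/idP; apply: step; rewrite // e_sym.
  by have := closed_connect closed_uv (conn u x); rewrite !inE [e v u]e_sym uv orbT.
move=> x y; case ux: (e u x).
  rewrite (Nu x y ux); case uy: (e u y) => /=; last by have := cover y; rewrite uy.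
  by apply/negP => /disj; apply.
by have := cover x; rewrite ux => /Nv ->; case: (e u y).
Qed.

End StrongEdge.

Section CompleteBipartite.

Variables (T : finType) (e : rel T) (A : {set T}).
Hypothesis e_sides : forall x y, e x y = ((x \in A) != (y \in A)).

Lemma complete_bipartite_strong_clique u v :
  u \in A -> v \notin A -> strong_clique e [set u; v].
Proof.
move=> uA vA; split.
  by apply/cliqueP => x y; rewrite !inE => /orP[]/eqP-> /orP[]/eqP->;
    rewrite ?eqxx // e_sides ?uA (negbTE vA).
move=> I /maxsetP[/independentP indI maxI].
have [I0|[x xI]] := set_0Vmem I.
  have indu : independent e [set u].
    by apply/independentP => a b; rewrite !inE => /eqP-> /eqP->; rewrite e_sides eqxx.
  by move: (maxI _ indu); rewrite I0 sub0set => /(_ isT)/setP/(_ u); rewrite !inE eqxx.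
have sideI y : y \in I -> (y \in A) = (x \in A).
  by move=> yI; apply/eqP/negbNE; rewrite -e_sides indI.
pose w := if x \in A then u else v.
have wA : (w \in A) = (x \in A) by rewrite /w; case: (x \in A); rewrite ?uA ?(negbTE vA).
have indJ : independent e (w |: I).
  apply/independentP => a b; rewrite !inE e_sides.
  by move=> /orP[/eqP->|/sideI->] /orP[/eqP->|/sideI->]; rewrite ?wA eqxx.
have wI : w \in I by rewrite -(maxI _ indJ (subsetUr _ _)) setU11.
by apply/set0Pn; exists w; rewrite !inE wI andbT /w; case: (x \in A); rewrite eqxx ?orbT.
Qed.

Lemma complete_bipartite_iso r :
  #|A| = r -> #|~: A| = r -> graph_iso e (@Kbip_rel r).
Proof.
move=> cardA cardCA.
pose psi (a : 'I_r + 'I_r) : T :=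
  match a with
  | inl i => enum_val (cast_ord (esym cardA) i)
  | inr j => enum_val (cast_ord (esym cardCA) j)
  end.
have psiA a : (psi a \in A) = (if a is inl _ then true else false).
  case: a => [i|j]; first exact: enum_valP.
  by apply: negbTE; rewrite -in_setC; apply: enum_valP.
have psi_inj : injective psi.
  move=> [i|i] [j|j] eq_ij; have := psiA (inl i); have := psiA (inr i);
    rewrite eq_ij ?psiA // => _ _; congr (_ _);
    exact: cast_ord_inj (enum_val_inj eq_ij).
have [g psiK gK] : bijective psi.
  apply: (inj_card_bij psi_inj).
  by rewrite card_sum !card_ord -(cardsC A) cardA cardCA.
exists g; split; first by exists psi.
move=> x y; rewrite -{2}(gK x) -{2}(gK y) e_sides !psiA.
by case: (g x); case: (g y).
Qed.

End CompleteBipartite.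

Theorem mainTheorem11 (r : nat) (T : finType) (e : rel T) :
  0 < r -> simple_graph e -> connected_graph e -> regular e r ->
  ((exists C : {set T}, strong_clique e C /\ #|C| = 2) <->
   graph_iso e (@Kbip_rel r)).
Proof.
move=> r_gt0 [e_sym e_irr] conn reg; split.
- move=> [C [uv_strong /eqP/cards2P [u [v [neq_uv C_uv]]]]].
  rewrite {}C_uv in uv_strong.
  have uv : e u v by case: uv_strong => /cliqueP/(_ u v) + _; apply; rewrite ?set21 ?set22.
  have bip := strong_edge_bipartition e_sym e_irr conn reg uv_strong uv.
  apply: (@complete_bipartite_iso _ _ [set x | e u x]) => [x y||].
  + by rewrite !inE bip.
  + exact: reg.
  + suff -> : ~: [set x | e u x] = [set x | e v x] by rewrite reg.
    by apply/setP => x; rewrite !inE (bip v) uv.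
- move=> [phi [[g _ gK] e_phi]].
  pose A := [set x | if phi x is inl _ then true else false].
  have e_sides x y : e x y = ((x \in A) != (y \in A)).
    by rewrite -e_phi !inE; case: (phi x); case: (phi y).
  pose u := g (inl (Ordinal r_gt0)); pose v := g (inr (Ordinal r_gt0)).
  have neq_uv : u != v by apply/eqP => /(congr1 phi); rewrite !gK.
  exists [set u; v]; split; last by rewrite cards2 neq_uv.
  by apply: complete_bipartite_strong_clique; rewrite // !inE gK.
Qed.
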